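(* Let $N\ge3$ and let $\bm A=A_1\cdots A_N$ be a random $N$-bit string with distribution $p_{\bm A}$ on $\{0,1\}^N$. For $k\in\{1,\dots,N-1\}$ let $\bm A_{\bar k}$ denote the $(N-2)$-bit substring excluding bits $k$ and $N$. Suppose that $p_{\bm A_{\bar k}}(\bm a_{\bar k})>0$ and $p_{A_kA_N|\bm A_{\bar k}}(a_ka_N|\bm a_{\bar k})>0$ for all $k,a_k,a_N,\bm a_{\bar k}$. Then $p_{\bm A}$ is uniquely determined by the family of conditional distributions $\{p_{A_kA_N|\bm A_{\bar k}}\}_{k\in\{1,\dots,N-1\}}$: any two such distributions on $\{0,1\}^N$ satisfying the positivity conditions and having the same conditionals $p_{A_kA_N|\bm A_{\bar k}}$ for all $k\in\{1,\dots,N-1\}$ are equal. *)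

From HB Require Import structures.
From mathcomp Require Import all_boot all_order all_algebra.
Set Implicit Arguments. Unset Strict Implicit. Unset Printing Implicit Defensive.
Import Order.TTheory GRing.Theory Num.Theory.
Local Open Scope ring_scope.

(* An N-bit string a = a_1 ... a_N is a finite function 'I_N -> bool;
   bit A_{i+1} is (a i) (0-based indexing), so the last bit A_N is index N.-1. *)
Definition bits (N : nat) := {ffun 'I_N -> bool}.

Definition is_distr (R : realFieldType) (N : nat) (p : bits N -> R) : Prop :=
  (forall x, 0 <= p x) /\ \sum_(x : bits N) p x = 1.

(* x and a agree on all bits except (0-based) bit k and the last bit N.-1,
   i.e. x_{\bar k} = a_{\bar k}. *)
Definition agree_off (N k : nat) (a x : bits N) : bool :=
  [forall i : 'I_N, ((val i != k) && (val i != N.-1)) ==> (x i == a i)].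

(* Marginal p_{A_{\bar k}}(a_{\bar k}), where a_{\bar k} is read off a. *)
Definition marg (R : realFieldType) (N k : nat) (p : bits N -> R) (a : bits N) : R :=
  \sum_(x : bits N | agree_off k a x) p x.

Definition cond (R : realFieldType) (N k : nat) (p : bits N -> R) (a : bits N) : R :=
  p a / marg k p a.

Definition positive_conds (R : realFieldType) (N : nat) (p : bits N -> R) : Prop :=
  forall (k : nat), (k < N.-1)%N -> forall a : bits N,
    0 < marg k p a /\ 0 < cond k p a.

From mathcomp Require Import all_boot all_order all_algebra.
From mathcomp Require Import ring zify.
From Stdlib Require Import FunctionalExtensionality.
Set Implicit Arguments. Unset Strict Implicit. Unset Printing Implicit Defensive.
Import Order.TTheory GRing.Theory Num.Theory.
Local Open Scope ring_scope.

(* Write a ~_k x when x and a agree off bits k and N.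
   On an ~_k class the marginal p_{A_{\bar k}} is constant, so equality of
   the conditionals p(a)/m_p(a) = q(a)/m_q(a) forces the ratio q/p to be
   constant on every ~_k class (k < N-1); positivity makes p nonzero.
   Any two strings are joined by a chain of strings changing one bit at a
   time, and a change of a single bit j is an ~_k step for k = j (or for any
   k when j is the last bit), so a function invariant under all ~_k with
   k < N-1 is constant.  Hence q = c * p for a constant c, and since both
   p and q sum to 1 we get c = 1, i.e. p = q. *)

Lemma agree_off_trans (N k : nat) (a x y : bits N) :
  agree_off k a x -> agree_off k x y = agree_off k a y.
Proof.
move=> /forallP Hax; apply/forallP/forallP => H i; have := H i; have := Hax i;
  by case: (_ && _) => //= /eqP ->.
Qed.

Lemma marg_agree (R : realFieldType) (N k : nat) (p : bits N -> R) (a x : bits N) :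
  agree_off k a x -> marg k p x = marg k p a.
Proof. by move=> hax; apply: eq_bigl => y; exact: agree_off_trans. Qed.

Lemma positive_conds_gt0 (R : realFieldType) (N : nat) (p : bits N -> R) :
  (1 < N)%N -> positive_conds p -> forall a, 0 < p a.
Proof.
move=> hN Pp a; have [marg_gt0 cond_gt0] := Pp 0%N ltac:(lia) a.
by rewrite -(divfK (lt0r_neq0 marg_gt0) (p a)); exact: mulr_gt0.
Qed.

Lemma ratio_agree (R : realFieldType) (N k : nat) (p q : bits N -> R) (a x : bits N) :
  (1 < N)%N -> positive_conds p -> positive_conds q -> (k < N.-1)%N ->
  (forall b, cond k p b = cond k q b) -> agree_off k a x ->
  q a / p a = q x / p x.
Proof.
move=> hN Pp Pq hk Hc hax.
have [mp_gt0 _] := Pp k hk a; have [mq_gt0 _] := Pq k hk a.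
have Ex := Hc x; rewrite /cond (marg_agree p hax) (marg_agree q hax) in Ex.
have qE b : p b / marg k p a = q b / marg k q a -> q b = p b / marg k p a * marg k q a.
  by move=> ->; rewrite divfK // gt_eqF.
rewrite (qE a (Hc a)) (qE x Ex); field.
by rewrite !gt_eqF ?(positive_conds_gt0 hN Pp).
Qed.

Definition splice (N j : nat) (a x : bits N) : bits N :=
  [ffun i : 'I_N => if (val i < j)%N then x i else a i].

(* Consecutive hybrids differ at most in bit j, so they are ~_k for k = j,
   and for every k when j is the last bit. *)
Lemma splice_step (N j k : nat) (a x : bits N) :
  (j == k) || (j == N.-1) -> agree_off k (splice j a x) (splice j.+1 a x).
Proof.
move=> hjk; apply/forallP => i; apply/implyP => /andP [hik hiN].
rewrite !ffunE ltnS leq_eqVlt.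
suff /negbTE -> : val i != j by [].
by apply/eqP => eij; move: hjk; rewrite -eij (negbTE hik) (negbTE hiN).
Qed.

Lemma agree_off_invariant_const (T : Type) (N : nat) (f : bits N -> T) :
  (1 < N)%N ->
  (forall k a x, (k < N.-1)%N -> agree_off k a x -> f a = f x) ->
  forall a x, f a = f x.
Proof.
move=> hN finv a x.
have splice0 : splice 0 a x = a by apply/ffunP => i; rewrite ffunE.
have spliceN : splice N a x = x by apply/ffunP => i; rewrite ffunE ltn_ord.
suff hyb j : (j <= N)%N -> f a = f (splice j a x) by rewrite (hyb N) ?spliceN.
elim: j => [|j IH] hj; first by rewrite splice0.
rewrite IH ?(ltnW hj) //.
have [hjN | hjN] := ltnP j N.-1.
- by apply: (finv j) => //; apply: splice_step; rewrite eqxx.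
- apply: (finv 0%N); first lia.
  by apply: splice_step; apply/orP; right; apply/eqP; lia.
Qed.

Lemma proportional_distr_eq (R : realFieldType) (N : nat) (p q : bits N -> R) (c : R) :
  is_distr p -> is_distr q -> (forall x, q x = c * p x) -> p = q.
Proof.
move=> [_ sum_p] [_ sum_q] qE.
have c1 : c = 1.
  by move: sum_q; under eq_bigr do rewrite qE; rewrite -mulr_sumr sum_p mulr1.
by apply: functional_extensionality => x; rewrite qE c1 mul1r.
Qed.

Theorem lemma11 (R : realFieldType) (N : nat) (hN : (3 <= N)%N)
  (p q : bits N -> R) :
  is_distr p -> is_distr q ->
  positive_conds p -> positive_conds q ->
  (forall k : nat, (k < N.-1)%N -> forall a : bits N, cond k p a = cond k q a) ->
  p = q.
Proof.
move=> Dp Dq Pp Pq Hc.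
have hN1 : (1 < N)%N by lia.
pose a0 : bits N := [ffun=> false].
have ratio_const : forall a x, q a / p a = q x / p x.
  apply: agree_off_invariant_const => // k a x hk.
  exact: ratio_agree hN1 Pp Pq hk (Hc k hk).
apply: (proportional_distr_eq (c := q a0 / p a0)) Dp Dq _ => x.
by rewrite (ratio_const a0 x) divfK // gt_eqF ?(positive_conds_gt0 hN1 Pp).
Qed.
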